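(* Let $t\geq 2$ and let $q\geq 4$ be a prime power. If $M^{(t)}_{2t\times t}(F_q)\neq\emptyset$, then there exists a $q^t$-CMS$(q^t,t)$.
   Context: $M^{(t)}_{k\times s}(F_q)$ denotes the set of $k\times s$ matrices over the finite field $F_q$ in which any $t$ rows are linearly independent. An MS$(n,t)$ is an $n\times n$ matrix with entries $0,\dots,n^2-1$ such that for each $e=1,\dots,t$ the entrywise $e$-th power has all row sums, column sums, main-diagonal sum and back-diagonal sum (entries $(i,n-1-i)$) equal. With $S_e(n)=\frac1n\sum_{k=0}^{n^2-1}k^e$, a family $\{B_0,\dots,B_{m-1}\}$ of MS$(n,t)$s, $B_s=(b^{(s)}_{i,j})$, $i,j\in\{0,\dots,n-1\}$, is an $m$-CMS$(n,t)$ if $\sum_{s}\sum_{j}(b^{(s)}_{i,j})^{t+1}=mS_{t+1}(n)$ for every $i$, $\sum_{s}\sum_{i}(b^{(s)}_{i,j})^{t+1}=mS_{t+1}(n)$ for every $j$, and $\sum_s\sum_i(b^{(s)}_{i,i})^{t+1}=\sum_s\sum_i(b^{(s)}_{i,n-1-i})^{t+1}=mS_{t+1}(n)$. *)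

From HB Require Import structures.
From mathcomp Require Import all_boot all_order all_algebra all_field.
Set Implicit Arguments. Unset Strict Implicit. Unset Printing Implicit Defensive.

Definition any_t_rows_indep (F : fieldType) (k s t : nat) (A : 'M[F]_(k, s)) :=
  forall f : 'I_t -> 'I_k, injective f -> row_free (rowsub f A).

(* n * S_e(n) = sum_{k < n^2} k^e  (we avoid the division by n) *)
Definition nS (e n : nat) : nat := \sum_(k < n ^ 2) k ^ e.

Definition entries_ok (n : nat) (B : 'M[nat]_n) :=
  (forall i j, B i j < n ^ 2) /\
  (forall i j i' j', B i j = B i' j' -> i = i' /\ j = j').

Definition row_pow_sum n (B : 'M[nat]_n) e (i : 'I_n) := \sum_(j < n) B i j ^ e.
Definition col_pow_sum n (B : 'M[nat]_n) e (j : 'I_n) := \sum_(i < n) B i j ^ e.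
Definition diag_pow_sum n (B : 'M[nat]_n) e := \sum_(i < n) B i i ^ e.
Definition bdiag_pow_sum n (B : 'M[nat]_n) e := \sum_(i < n) B i (rev_ord i) ^ e.

Definition MS (n t : nat) (B : 'M[nat]_n) :=
  entries_ok B /\
  forall e, 1 <= e <= t ->
    exists c, (forall i, row_pow_sum B e i = c) /\ (forall j, col_pow_sum B e j = c)
              /\ diag_pow_sum B e = c /\ bdiag_pow_sum B e = c.

(* m-CMS(n,t): family B_0..B_{m-1} of (distinct) MS(n,t)s with the
   (t+1)-th power compound conditions, multiplied through by n. *)
Definition CMS (m n t : nat) (B : 'I_m -> 'M[nat]_n) :=
  injective B /\ (forall s, MS t (B s)) /\
  (forall i : 'I_n, n * (\sum_(s < m) row_pow_sum (B s) t.+1 i) = m * nS t.+1 n) /\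
  (forall j : 'I_n, n * (\sum_(s < m) col_pow_sum (B s) t.+1 j) = m * nS t.+1 n) /\
  n * (\sum_(s < m) diag_pow_sum (B s) t.+1) = m * nS t.+1 n /\
  n * (\sum_(s < m) bdiag_pow_sum (B s) t.+1) = m * nS t.+1 n.

(* Encode F^(2t) as the integers below q^(2t) = n^2, n = q^t, by base-q digits ([code]).
   Call a family of n vectors t-uniform ([proj_injective t]) if every choice of t
   coordinates maps it bijectively onto F^t.  Each monomial of the e-th power of a code
   involves at most e coordinates, so for e <= t the e-th power sum of the codes of a
   t-uniform family is the same for all such families.
   If every t rows of A are independent, so are those of D A for a nonsingular diagonal D,
   and x |-> D A x + w is t-uniform.  Let A' = diag(lam,..,lam,lam^-1,..,lam^-1) A with
   lam not in {0, 1, -1}, S = [0; I], x_0, .., x_(n-1) an enumeration of F^t with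
   x_(n-1-i) = c - x_i, and B_s(i,j) the code of A x_i + A' x_j + S x_s.  Rows, columns
   and both diagonals of B_s are t-uniform (D = 1, diag(lam..), 1 + diag(lam..),
   1 - diag(lam..)), so B_s is an MS(n,t); its entries are distinct since the two halves
   of A x + A' y determine x + lam y and x + lam^-1 y.  Letting s vary as well, each line
   runs once through all of F^(2t), which gives the compound (t+1)-th power condition. *)

From HB Require Import structures.
From mathcomp Require Import all_boot all_order all_algebra all_field zify.
Set Implicit Arguments. Unset Strict Implicit. Unset Printing Implicit Defensive.
Import GRing.Theory.

Lemma reindex_inj_card (R : Type) (idx : R) (op : Monoid.com_law idx)
    (X Y : finType) (g : X -> Y) (h : Y -> R) :
  injective g -> #|Y| <= #|X| -> \big[op/idx]_x h (g x) = \big[op/idx]_y h y.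
Proof.
by move=> g_inj YX; rewrite (reindex g) //; exact: onW_bij (inj_card_bij g_inj YX).
Qed.

Lemma expn_sum_ffun m e (a : 'I_m -> nat) :
  (\sum_(k < m) a k) ^ e = \sum_(kk : {ffun 'I_e -> 'I_m}) \prod_(i < e) a (kk i).
Proof.
have -> : forall x, x ^ e = \prod_(i < e) x by move=> x; rewrite prod_nat_const card_ord.
exact: (bigA_distr_bigA (fun (i : 'I_e) (k : 'I_m) => a k)).
Qed.

Lemma subset_extend_card (T : finType) (A : {set T}) m :
  #|A| <= m <= #|T| -> exists2 B : {set T}, A \subset B & #|B| = m.
Proof.
elim: m => [|m IH] /andP[Am mT].
  by exists A => //; apply/eqP; rewrite -leqn0.
have [mA|Am'] := ltnP m #|A|; first by exists A => //; apply/eqP; rewrite eqn_leq Am.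
have [B AB cardB] := IH (introT andP (conj Am' (ltnW mT))).
have /card_gt0P[x] : 0 < #|~: B| by have := cardsC B; lia.
rewrite inE => xB; exists (x |: B); first exact: subset_trans AB (subsetUr _ _).
by rewrite cardsU1 xB cardB.
Qed.

Lemma factor_through_injection (T : finType) e t (kk : 'I_e -> T) :
  e <= t <= #|T| ->
  exists2 f : 'I_t -> T, injective f & exists l : 'I_e -> 'I_t, forall i, kk i = f (l i).
Proof.
move=> /andP[et tT].
have imt : #|[set kk i | i in 'I_e]| <= t.
  by apply: leq_trans (leq_imset_card _ _) _; rewrite card_ord.
have [K sK cardK] := subset_extend_card (introT andP (conj imt tT)).
have kkK i : kk i \in K by apply: (subsetP sK); apply: imset_f.
exists (fun i => enum_val (cast_ord (esym cardK) i)).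
  by move=> i j /enum_val_inj /cast_ord_inj.
exists (fun i => cast_ord cardK (enum_rank_in (kkK i) (kk i))) => i.
by rewrite cast_ordK enum_rankK_in.
Qed.

Lemma exists_notin (T : finType) (s : seq T) : size s < #|T| -> exists x, x \notin s.
Proof.
move=> s_lt; apply/existsP; rewrite -negb_forall; apply: contraTN s_lt => /forallP s_all.
rewrite -leqNgt; apply: leq_trans (card_size s).
by apply/subset_leq_card/subsetP => x _; exact: s_all.
Qed.

Section Digits.
Variable q : nat.

Lemma sum_digits_lt m (a : 'I_m -> nat) :
  (forall k, a k < q) -> \sum_(k < m) a k * q ^ k < q ^ m.
Proof.
elim: m a => [|m IH] a a_lt; first by rewrite big_ord0.
rewrite big_ord_recr /= expnS.
have := IH (fun k => a (widen_ord (leqnSn m) k)) (fun k => a_lt _).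
have := a_lt ord_max.
move: (\sum_(k < m) _) (a ord_max) (q ^ m) => low x Q; nia.
Qed.

Lemma sum_digits_inj m (a b : 'I_m -> nat) :
  (forall k, a k < q) -> (forall k, b k < q) ->
  \sum_(k < m) a k * q ^ k = \sum_(k < m) b k * q ^ k -> a =1 b.
Proof.
elim: m a b => [|m IH] a b a_lt b_lt; first by move=> _ [].
rewrite !big_ord_recr /= => E.
have qm_gt0 : 0 < q ^ m by rewrite expn_gt0 (leq_ltn_trans _ (a_lt ord_max)).
have low_lt (c : 'I_m.+1 -> nat) : (forall k, c k < q) ->
    \sum_(k < m) c (widen_ord (leqnSn m) k) * q ^ k < q ^ m.
  by move=> c_lt; apply: sum_digits_lt => k; apply: c_lt.
have top : a ord_max = b ord_max.
  have := congr1 (divn^~ (q ^ m)) E.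
  by rewrite /= ![_ + _ * _]addnC !divnMDl // !divn_small ?low_lt // !addn0.
move: E; rewrite top => /addIn E k.
case: (unliftP ord_max k) => [j ->|-> //].
have := IH _ _ (fun k => a_lt _) (fun k => b_lt _) E j.
by congr (a _ = b _); apply: val_inj; rewrite /= /bump leqNgt ltn_ord.
Qed.

End Digits.

(* The enumeration lists each pair {y, r y} with y first in the order of [enum Y],
   then the fixed point (if any), then the partners r y in reverse order. *)
Lemma involution_rev_enum (Y : finType) (r : Y -> Y) :
  involutive r -> (forall y z, r y = y -> r z = z -> y = z) ->
  exists2 s : seq Y, perm_eq s (enum Y) & map r s = rev s.
Proof.
move=> rK fix_uniq.
pose rk (y : Y) : nat := enum_rank y.
pose low := [seq y <- enum Y | rk y < rk (r y)].
pose fixed := [seq y <- enum Y | r y == y].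
have rk_eq y : (rk y == rk (r y)) = (r y == y).
  by rewrite eq_sym /rk val_eqE (inj_eq enum_rank_inj).
have mem_low y : (y \in low) = (rk y < rk (r y)) by rewrite mem_filter mem_enum andbT.
have mem_fixed y : (y \in fixed) = (rk y == rk (r y)).
  by rewrite mem_filter mem_enum andbT rk_eq.
have mem_high y : (y \in rev (map r low)) = (rk (r y) < rk y).
  by rewrite mem_rev -{1}[y]rK mem_map ?mem_low ?rK //; exact: inv_inj.
have fixed_rev : rev fixed = fixed.
  suff rev_fixed l : uniq l -> all (fun y => r y == y) l -> rev l = l.
    by apply: rev_fixed; [rewrite filter_uniq ?enum_uniq | apply: filter_all].
  case: l => [|y [|z l]] //= /andP[]; rewrite inE => /norP[yz _] _ /and3P[/eqP ry /eqP rz _].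
  by rewrite (fix_uniq y z ry rz) eqxx in yz.
exists (low ++ fixed ++ rev (map r low)); last first.
  rewrite !map_cat !rev_cat revK map_rev (mapK rK) fixed_rev.
  by rewrite -catA [map r fixed]map_id_in // => y; rewrite mem_filter => /andP[/eqP].
apply: uniq_perm; rewrite ?enum_uniq //; last first.
  move=> y; rewrite mem_enum !mem_cat mem_low mem_fixed mem_high.
  by case: ltngtP.
have low_fixed : ~~ has (mem low) fixed.
  by apply/hasPn => y /=; rewrite mem_fixed mem_low => /eqP ->; rewrite ltnn.
have low_high : ~~ has (mem low) (rev (map r low)).
  by apply/hasPn => y /=; rewrite mem_high mem_low => /ltnW; rewrite leqNgt => /negbTE ->.
have fixed_high : ~~ has (mem fixed) (rev (map r low)).
  by apply/hasPn => y /=; rewrite mem_high mem_fixed => /ltn_eqF; rewrite eq_sym => ->.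
have low_uniq : uniq low := filter_uniq _ (enum_uniq Y).
have fixed_uniq : uniq fixed := filter_uniq _ (enum_uniq Y).
rewrite !cat_uniq has_cat rev_uniq (map_inj_uniq (inv_inj rK)).
by rewrite negb_or low_fixed low_high fixed_high low_uniq fixed_uniq.
Qed.

Lemma involution_conj_rev_ord (Y : finType) (r : Y -> Y) n :
  involutive r -> (forall y z, r y = y -> r z = z -> y = z) -> #|Y| = n ->
  exists2 g : 'I_n -> Y, injective g & forall k, g (rev_ord k) = r (g k).
Proof.
move=> rK fix_uniq cardY; have [s s_enum s_rev] := involution_rev_enum rK fix_uniq.
have s_size : size s = n by rewrite (perm_size s_enum) -cardE.
pose g := tnth (Tuple (introT eqP s_size)).
exists g; first by apply/tuple_uniqP; rewrite (perm_uniq s_enum) enum_uniq.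
move=> k; have k_lt : k < size s by rewrite s_size.
have gE j : g j = nth (g k) s j := tnth_nth (g k) _ j.
rewrite (gE (rev_ord k)) {2}(gE k) -(nth_map _ (r (g k)) _ k_lt) s_rev nth_rev //.
by rewrite s_size; apply: set_nth_default; rewrite s_size (ltn_ord (rev_ord k)).
Qed.

Section PowerSums.
Variable F : finFieldType.
Local Notation q := #|F|.

Definition proj_injective t m (X : finType) (g : X -> 'cV[F]_m) :=
  forall f : 'I_t -> 'I_m, injective f -> injective (fun x => rowsub f (g x)).

Lemma card_cV k : #|{: 'cV[F]_k}| = q ^ k.
Proof. by rewrite card_mx muln1. Qed.

Lemma sum_pow_separable_proj_injective t m e (X Y : finType)
    (g : X -> 'cV[F]_m) (h : Y -> 'cV[F]_m) (phi : 'I_m -> F -> nat) :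
  e <= t <= m -> #|X| = q ^ t -> #|Y| = q ^ t ->
  proj_injective t g -> proj_injective t h ->
  \sum_x (\sum_k phi k (g x k ord0)) ^ e = \sum_y (\sum_k phi k (h y k ord0)) ^ e.
Proof.
move=> etm cardX cardY g_inj h_inj.
under eq_bigr do rewrite expn_sum_ffun.
under [RHS]eq_bigr do rewrite expn_sum_ffun.
rewrite exchange_big [RHS]exchange_big; apply: eq_bigr => kk _.
have [f f_inj [l kkE]] : exists2 f : 'I_t -> 'I_m, injective f &
    exists l : 'I_e -> 'I_t, forall i, kk i = f (l i).
  by apply: factor_through_injection; rewrite card_ord.
pose psi (z : 'cV[F]_t) := \prod_(i < e) phi (kk i) (z (l i) ord0).
have proj_sum (Z : finType) (G : Z -> 'cV[F]_m) : #|Z| = q ^ t -> proj_injective t G ->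
    \sum_z \prod_(i < e) phi (kk i) (G z (kk i) ord0) = \sum_(u : 'cV[F]_t) psi u.
  move=> cardZ G_inj; rewrite -(reindex_inj_card _ psi (G_inj f f_inj)); last first.
    by rewrite card_cV cardZ.
  by apply: eq_bigr => z _; apply: eq_bigr => i _; rewrite kkE mxE.
by rewrite !proj_sum.
Qed.

Definition code m (w : 'cV[F]_m) : nat := \sum_(k < m) enum_rank (w k ord0) * q ^ k.

Lemma code_lt m (w : 'cV[F]_m) : code w < q ^ m.
Proof. by apply: sum_digits_lt => k; exact: ltn_ord. Qed.

Lemma code_inj m : injective (@code m).
Proof.
move=> w w' /(sum_digits_inj (fun k => ltn_ord _) (fun k => ltn_ord _)) E.
by apply/matrixP => k j; rewrite (ord1 j); apply/enum_rank_inj/val_inj/E.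
Qed.

Lemma sum_pow_code_injective m e (X : finType) (g : X -> 'cV[F]_m) :
  injective g -> #|X| = q ^ m -> \sum_x code (g x) ^ e = \sum_(k < q ^ m) k ^ e.
Proof.
move=> g_inj cardX.
rewrite (reindex_inj_card _ (fun w => code w ^ e) g_inj); last by rewrite cardX card_cV.
pose ord_code w : 'I_(q ^ m) := Ordinal (code_lt w).
rewrite -(reindex_inj_card _ (fun k : 'I_(q ^ m) => k ^ e) (g := ord_code)) //.
  by move=> w w' [/code_inj].
by rewrite card_ord card_cV.
Qed.

End PowerSums.

Local Open Scope ring_scope.

Lemma subr_fixed_uniq (F : fieldType) (V : lmodType F) (c x y : V) :
  c != 0 -> c - x = x -> c - y = y -> x = y.
Proof.
move=> c_neq0 /eqP; rewrite subr_eq => /eqP cx /eqP; rewrite subr_eq => /eqP cy.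
have : (2%:R : F) *: (x - y) == 0 by rewrite scalerBr !scaler_nat !mulr2n -cx -cy subrr.
rewrite scaler_eq0 subr_eq0 => /orP[/eqP two0|/eqP //].
by move: c_neq0; rewrite cx -mulr2n -scaler_nat two0 scale0r eqxx.
Qed.

Lemma scale_pair_inj (F : fieldType) (V : lmodType F) (a b : F) (x y x' y' : V) :
  a != b -> x + a *: y = x' + a *: y' -> x + b *: y = x' + b *: y' -> x = x' /\ y = y'.
Proof.
move=> ab Ea Eb.
have diff (z w : V) : (z + a *: w) - (z + b *: w) = (a - b) *: w.
  by rewrite scalerBl opprD addrACA subrr add0r.
have yy' : y = y'.
  by apply: (scalerI (_ : a - b != 0)); rewrite ?subr_eq0 // -(diff x y) -(diff x' y') Ea Eb.
by split=> //; move: Ea; rewrite yy' => /addIr.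
Qed.

Lemma rowsubD (V : zmodType) m n m' (f : 'I_m' -> 'I_m) (M N : 'M[V]_(m, n)) :
  rowsub f (M + N) = rowsub f M + rowsub f N.
Proof. by apply/matrixP => i j; rewrite !mxE. Qed.

Section Independence.
Variables (F : fieldType) (t m : nat).

Lemma indep_rowsub_unitmx (M : 'M[F]_(m, t)) (f : 'I_t -> 'I_m) :
  any_t_rows_indep t M -> injective f -> rowsub f M \in unitmx.
Proof. by rewrite -row_free_unit; apply. Qed.

Lemma indep_diag_mul (d : 'rV[F]_m) (M : 'M[F]_(m, t)) :
  any_t_rows_indep t M -> (forall k, d 0 k != 0) -> any_t_rows_indep t (diag_mx d *m M).
Proof.
move=> M_indep d_neq0 f f_inj.
have -> : rowsub f (diag_mx d *m M) = diag_mx (\row_i d 0 (f i)) *m rowsub f M.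
  by rewrite !mul_diag_mx; apply/matrixP => i j; rewrite !mxE.
rewrite row_free_unit unitmx_mul indep_rowsub_unitmx // andbT unitmxE det_diag unitfE.
by apply/prodf_neq0 => i _; rewrite mxE.
Qed.

End Independence.

Lemma proj_injective_mul (F : finFieldType) t m (X : finType) (M : 'M[F]_(m, t))
    (phi : X -> 'cV[F]_t) :
  any_t_rows_indep t M -> injective phi -> proj_injective t (fun x => M *m phi x).
Proof.
move=> M_indep phi_inj f f_inj x x' /=; rewrite -!mul_rowsub_mx => E.
by apply/phi_inj/(can_inj (mulKmx (indep_rowsub_unitmx M_indep f_inj))).
Qed.

Lemma proj_injective_addr (F : finFieldType) t m (X : finType) (g : X -> 'cV[F]_m) w :
  proj_injective t g -> proj_injective t (fun x => g x + w).
Proof.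
by move=> g_inj f f_inj x x' /=; rewrite !rowsubD => /addIr; exact: g_inj.
Qed.

Section Construction.
Variables (t : nat) (F : finFieldType) (A : 'M[F]_(2 * t, t)).
Hypothesis A_indep : any_t_rows_indep t A.
Local Notation q := #|F|.
Local Notation n := (q ^ t)%N.
Variable io : 'I_n -> 'cV[F]_t.
Hypothesis io_inj : injective io.

Let twice_t : (t + t = 2 * t)%N := etrans (addnn t) (esym (mul2n t)).
Definition top (k : 'I_t) : 'I_(2 * t) := cast_ord twice_t (lshift t k).
Definition bot (k : 'I_t) : 'I_(2 * t) := cast_ord twice_t (rshift t k).

Lemma top_inj : injective top. Proof. by move=> i j /cast_ord_inj /lshift_inj. Qed.
Lemma bot_inj : injective bot. Proof. by move=> i j /cast_ord_inj /rshift_inj. Qed.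

Definition shift_mx : 'M[F]_(2 * t, t) := \matrix_(k, l) (k == bot l)%:R.

Lemma rowsub_top_shift : rowsub top shift_mx = 0.
Proof.
apply/matrixP => i j; rewrite !mxE -val_eqE /=.
by rewrite ltn_eqF // ltn_addr.
Qed.

Lemma rowsub_bot_shift : rowsub bot shift_mx = 1%:M.
Proof. by apply/matrixP => i j; rewrite !mxE (inj_eq bot_inj). Qed.

Lemma shift_pair_inj (M : 'M[F]_(2 * t, t)) :
  any_t_rows_indep t M -> injective (fun p : 'cV_t * 'cV_t => M *m p.1 + shift_mx *m p.2).
Proof.
move=> M_indep [x y] [x' y'] /= E.
have := congr1 (rowsub top) E.
rewrite !rowsubD -!mul_rowsub_mx rowsub_top_shift !mul0mx !addr0.
move/(can_inj (mulKmx (indep_rowsub_unitmx M_indep top_inj))) => xx'.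
move: E; rewrite xx' => /addrI /(congr1 (rowsub bot)).
by rewrite -!mul_rowsub_mx rowsub_bot_shift !mul1mx => ->.
Qed.

Lemma line_pow_sum (M : 'M[F]_(2 * t, t)) (w : 'cV[F]_(2 * t)) s e :
  any_t_rows_indep t M -> (e <= t)%N ->
  (\sum_k code (M *m io k + shift_mx *m io s + w) ^ e =
   \sum_(z : 'cV[F]_t) code (A *m z) ^ e)%N.
Proof.
move=> M_indep et.
apply: (sum_pow_separable_proj_injective (t := t) (fun k a => enum_rank a * q ^ k)%N).
- by rewrite et leq_pmull.
- by rewrite card_ord.
- by rewrite card_cV.
- move=> f f_inj k k' /=; rewrite -!addrA.
  exact: (proj_injective_addr (proj_injective_mul M_indep io_inj) f_inj).
- exact: (proj_injective_mul (phi := id)).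
Qed.

Lemma line_compound_pow_sum (M : 'M[F]_(2 * t, t)) (w : 'cV[F]_(2 * t)) e :
  any_t_rows_indep t M ->
  (\sum_s \sum_k code (M *m io k + shift_mx *m io s + w) ^ e =
   \sum_(k < q ^ (2 * t)) k ^ e)%N.
Proof.
move=> M_indep; rewrite pair_bigA /=.
apply: sum_pow_code_injective.
  move=> [s k] [s' k'] /= /addIr E.
  have [] := shift_pair_inj M_indep (x1 := (io k, io s)) (x2 := (io k', io s')) E.
  by move=> /io_inj -> /io_inj ->.
by rewrite card_prod card_ord -expnD addnn -mul2n.
Qed.

Variables (lam : F) (c : 'cV[F]_t).
Hypothesis lam_generic : [&& lam != 0, lam != 1 & lam != -1].
Hypothesis io_rev : forall i, io (rev_ord i) = c - io i.

Definition lam_diag : 'rV[F]_(2 * t) := \row_k (if (k < t)%N then lam else lam^-1).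
Definition Alam : 'M[F]_(2 * t, t) := diag_mx lam_diag *m A.

Lemma lam_diag_generic k :
  [&& lam_diag 0 k != 0, lam_diag 0 k != 1 & lam_diag 0 k != -1].
Proof.
rewrite mxE; case: ifP => // _; case/and3P: lam_generic => l0 l1 lN1.
rewrite invr_eq0 invr_eq1 l0 l1 /=.
by apply: contra lN1 => /eqP E; rewrite -[lam]invrK E invrN1.
Qed.

Lemma lam_neq_inv : lam != lam^-1.
Proof.
have lam0 : lam != 0 by case/and3P: lam_generic.
apply: contraTneq lam_generic => lam_inv.
have : lam ^+ 2 == 1 by rewrite expr2 {1}lam_inv mulVf.
by rewrite sqrf_eq1 => /orP[] /eqP ->; rewrite eqxx !andbF.
Qed.

Lemma Alam_indep : any_t_rows_indep t Alam.
Proof. by apply: (indep_diag_mul A_indep) => k; case/and3P: (lam_diag_generic k). Qed.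

Lemma A_add_Alam_indep : any_t_rows_indep t (A + Alam).
Proof.
rewrite -{1}[A]mul1mx -diag_const_mx -mulmxDl -raddfD.
apply: (indep_diag_mul A_indep) => k; rewrite !mxE addrC addr_eq0.
by case/and3P: (lam_diag_generic k); rewrite mxE.
Qed.

Lemma A_sub_Alam_indep : any_t_rows_indep t (A - Alam).
Proof.
rewrite -{1}[A]mul1mx -diag_const_mx -mulmxBl -raddfB.
apply: (indep_diag_mul A_indep) => k; rewrite !mxE subr_eq0 eq_sym.
by case/and3P: (lam_diag_generic k); rewrite mxE.
Qed.

Lemma rowsub_top_Alam : rowsub top Alam = lam *: rowsub top A.
Proof. by apply/matrixP => i j; rewrite /Alam mul_diag_mx !mxE /= ltn_ord. Qed.

Lemma rowsub_bot_Alam : rowsub bot Alam = lam^-1 *: rowsub bot A.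
Proof. by apply/matrixP => i j; rewrite /Alam mul_diag_mx !mxE /= ltnNge leq_addr. Qed.

Lemma A_Alam_pair_inj : injective (fun p : 'cV_t * 'cV_t => A *m p.1 + Alam *m p.2).
Proof.
move=> [x y] [x' y'] /= E.
have half (f : 'I_t -> 'I_(2 * t)) a : injective f -> rowsub f Alam = a *: rowsub f A ->
    x + a *: y = x' + a *: y'.
  move=> f_inj Alam_f; have := congr1 (rowsub f) E.
  rewrite !rowsubD -!(mul_rowsub_mx f A) -!(mul_rowsub_mx f Alam) Alam_f.
  rewrite -!scalemxAl !scalemxAr -!mulmxDr.
  exact/(can_inj (mulKmx (indep_rowsub_unitmx A_indep f_inj))).
have [-> ->] := scale_pair_inj lam_neq_inv (half _ _ top_inj rowsub_top_Alam)
  (half _ _ bot_inj rowsub_bot_Alam).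
by [].
Qed.

Definition entry (s i j : 'I_n) : 'cV[F]_(2 * t) :=
  A *m io i + Alam *m io j + shift_mx *m io s.

Definition square (s : 'I_n) : 'M[nat]_n := \matrix_(i, j) code (entry s i j).

Lemma entry_row s i j : entry s i j = Alam *m io j + shift_mx *m io s + A *m io i.
Proof. by rewrite /entry [A *m _ + _]addrC addrAC. Qed.

Lemma entry_col s i j : entry s i j = A *m io i + shift_mx *m io s + Alam *m io j.
Proof. by rewrite /entry addrAC. Qed.

(* The trailing [+ 0] puts the diagonal in the shape expected by [line_pow_sum]. *)
Lemma entry_diag s i : entry s i i = (A + Alam) *m io i + shift_mx *m io s + 0.
Proof. by rewrite /entry addr0 mulmxDl. Qed.

Lemma entry_bdiag s i :
  entry s i (rev_ord i) = (A - Alam) *m io i + shift_mx *m io s + Alam *m c.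
Proof.
by rewrite /entry io_rev mulmxBr mulmxBl [Alam *m c - _]addrC addrA [_ + Alam *m c + _]addrAC.
Qed.

Lemma entry_inj s i j i' j' : entry s i j = entry s i' j' -> i = i' /\ j = j'.
Proof.
move=> /addIr E.
have [] := A_Alam_pair_inj (x1 := (io i, io j)) (x2 := (io i', io j')) E.
by move=> /io_inj -> /io_inj ->.
Qed.

Lemma square_MS s : MS t (square s).
Proof.
split.
  split => [i j|i j i' j']; rewrite !mxE; last by move/code_inj/entry_inj.
  by apply: leq_trans (code_lt (entry s i j)) _; rewrite -expnM mulnC.
move=> e /andP[_ et]; exists (\sum_(z : 'cV[F]_t) code (A *m z) ^ e)%N.
split; [|split; [|split]].
- move=> i; rewrite /row_pow_sum; under eq_bigr do rewrite mxE entry_row.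
  exact: line_pow_sum Alam_indep et.
- move=> j; rewrite /col_pow_sum; under eq_bigr do rewrite mxE entry_col.
  exact: line_pow_sum A_indep et.
- rewrite /diag_pow_sum; under eq_bigr do rewrite mxE entry_diag.
  exact: line_pow_sum A_add_Alam_indep et.
- rewrite /bdiag_pow_sum; under eq_bigr do rewrite mxE entry_bdiag.
  exact: line_pow_sum A_sub_Alam_indep et.
Qed.

Lemma square_CMS : CMS t square.
Proof.
split.
  move=> s s' /(congr1 (fun B : 'M[nat]_n => B s s)); rewrite !mxE.
  move/code_inj; rewrite /entry => /addrI /(congr1 (rowsub bot)).
  by rewrite -!mul_rowsub_mx rowsub_bot_shift !mul1mx => /io_inj.
split; first exact: square_MS.
have nS_E e : nS e n = (\sum_(k < q ^ (2 * t)) k ^ e)%N by rewrite /nS -expnM mulnC.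
split; [move=> i|split; [move=> j|split]]; congr (_ * _)%N; rewrite nS_E.
- rewrite /row_pow_sum; under eq_bigr do under eq_bigr do rewrite mxE entry_row.
  exact: line_compound_pow_sum Alam_indep.
- rewrite /col_pow_sum; under eq_bigr do under eq_bigr do rewrite mxE entry_col.
  exact: line_compound_pow_sum A_indep.
- rewrite /diag_pow_sum; under eq_bigr do under eq_bigr do rewrite mxE entry_diag.
  exact: line_compound_pow_sum A_add_Alam_indep.
- rewrite /bdiag_pow_sum; under eq_bigr do under eq_bigr do rewrite mxE entry_bdiag.
  exact: line_compound_pow_sum A_sub_Alam_indep.
Qed.

End Construction.

Local Close Scope ring_scope.

Theorem lemma3p4 (t : nat) (F : finFieldType) :
  2 <= t -> 4 <= #|F| ->
  (exists A : 'M[F]_(2 * t, t), any_t_rows_indep t A) ->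
  exists B : 'I_(#|F| ^ t) -> 'M[nat]_(#|F| ^ t), CMS t B.
Proof.
move=> t_ge2 F_ge4 [A A_indep].
have [lam] : exists lam : F, lam \notin [:: 0; 1; -1]%R by apply: exists_notin.
rewrite !inE !negb_or => lam_generic.
pose c : 'cV[F]_t := const_mx 1%R.
have c_neq0 : c != 0%R.
  apply/eqP => /matrixP/(_ (Ordinal t_ge2) ord0).
  by rewrite !mxE => /eqP; rewrite oner_eq0.
have [io io_inj io_rev] := involution_conj_rev_ord (subKr c)
  (fun y z => @subr_fixed_uniq _ _ c y z c_neq0) (card_cV F t).
by exists (square A io lam); exact: square_CMS.
Qed.
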